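(* Let $\mathcal{A}$ be a u-MPS core tensor over a finite alphabet $\Sigma$ with bond dimension $D$, and let $R$ be an arbitrary (possibly ambiguous) regular expression over $\Sigma$. Then the generalized right transfer operator $\mathcal{E}^{r}_R$ converges if and only if the generalized left transfer operator $\mathcal{E}^{\ell}_R$ converges, and in this case, for all $Q_r, Q_\ell \in \mathbb{R}^{D\times D}$, $$\mathcal{E}^{r}_R(Q_r) = \sum_{s\in\Sigma^*} |s|_R\, \mathcal{A}(s)\, Q_r\, \mathcal{A}(s)^T, \qquad \mathcal{E}^{\ell}_R(Q_\ell) = \sum_{s\in\Sigma^*} |s|_R\, \mathcal{A}(s)^T Q_\ell\, \mathcal{A}(s).$$ In particular, if $R$ is unambiguous (i.e. $|s|_R\in\{0,1\}$ for all $s$), then $\mathcal{E}^{r}_R(Q_r) = \sum_{s\in \mathcal{L}(R)} \mathcal{A}(s) Q_r \mathcal{A}(s)^T$ and $\mathcal{E}^{\ell}_R(Q_\ell) = \sum_{s\in \mathcal{L}(R)} \mathcal{A}(s)^T Q_\ell \mathcal{A}(s)$, where $\mathcal{L}(R)$ is the set of strings matching $R$.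
   Context: A u-MPS (uniform matrix product state) over a finite alphabet $\Sigma$ of size $d$ consists of a core tensor $\mathcal{A}$ of shape $(D,d,D)$, which assigns to each character $c\in\Sigma$ a matrix $\mathcal{A}(c)\in\mathbb{R}^{D\times D}$, together with boundary vectors $\alpha,\omega\in\mathbb{R}^D$. For a string $s=s_1\cdots s_n\in\Sigma^*$, $\mathcal{A}(s):=\mathcal{A}(s_1)\cdots\mathcal{A}(s_n)$, with $\mathcal{A}(\varepsilon)=I$ for the empty string $\varepsilon$. Regular expressions (regex) are syntax trees built from: single characters $c\in\Sigma$; concatenations $R_1R_2$; unions $R_1|R_2$; Kleene closures $S^*$. The match count $|s|_R\in\mathbb{N}\cup\{\infty\}$ of a string $s$ against $R$ is defined recursively: $|s|_c=1$ if $s=c$ and $0$ otherwise; $|s|_{R_1R_2}=\sum_{s_1s_2=s}|s_1|_{R_1}|s_2|_{R_2}$ (sum over all splittings of $s$ into prefix and suffix); $|s|_{R_1|R_2}=|s|_{R_1}+|s|_{R_2}$; $|s|_{S^*}=\sum_{n\ge0}\sum_{s_1\cdots s_n=s}|s_1|_S\cdots|s_n|_S$ (sum over all splittings into $n$ contiguous pieces; the $n=0$ term is $1$ if $s=\varepsilon$ and $0$ otherwise). $R$ is unambiguous if $|s|_R\in\{0,1\}$ for all $s$. Generalized transfer operators are linear maps on $D\times D$ matrices defined recursively: $\mathcal{E}^r_c(Q)=\mathcal{A}(c)Q\mathcal{A}(c)^T$, $\mathcal{E}^\ell_c(Q)=\mathcal{A}(c)^TQ\mathcal{A}(c)$; $\mathcal{E}^r_{R_1R_2}=\mathcal{E}^r_{R_1}\circ\mathcal{E}^r_{R_2}$,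 $\mathcal{E}^\ell_{R_1R_2}=\mathcal{E}^\ell_{R_2}\circ\mathcal{E}^\ell_{R_1}$; $\mathcal{E}^{r}_{R_1|R_2}=\mathcal{E}^{r}_{R_1}+\mathcal{E}^{r}_{R_2}$, $\mathcal{E}^{\ell}_{R_1|R_2}=\mathcal{E}^{\ell}_{R_1}+\mathcal{E}^{\ell}_{R_2}$; $\mathcal{E}^r_{S^*}(Q)=\sum_{n=0}^\infty(\mathcal{E}^r_S)^{\circ n}(Q)$, $\mathcal{E}^\ell_{S^*}(Q)=\sum_{n=0}^\infty(\mathcal{E}^\ell_S)^{\circ n}(Q)$, where $(\cdot)^{\circ 0}$ is the identity map. $\mathcal{E}^r_R$ (resp. $\mathcal{E}^\ell_R$) is said to converge if every infinite series arising from Kleene closures in this recursive definition converges (equivalently, for every subexpression $S^*$ of $R$, the spectral radius of the corresponding operator $\mathcal{E}^r_S$, resp. $\mathcal{E}^\ell_S$, is $<1$). *)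

From Stdlib Require Import Reals List Arith ClassicalEpsilon.
Import ListNotations.
Open Scope R_scope.

(** * Real matrices: a D x D matrix is a function nat -> nat -> R, of which
    only the entries (i,j) with i,j < D are meaningful. *)
Definition Mat := nat -> nat -> R.

Fixpoint rsum (n : nat) (f : nat -> R) : R :=
  match n with O => 0 | S m => rsum m f + f m end.

Definition mmul (D : nat) (M N : Mat) : Mat :=
  fun i j => rsum D (fun k => M i k * N k j).
Definition mtr (M : Mat) : Mat := fun i j => M j i.
Definition madd (M N : Mat) : Mat := fun i j => M i j + N i j.
Definition mscale (a : R) (M : Mat) : Mat := fun i j => a * M i j.
Definition mzero : Mat := fun _ _ => 0.
Definition mid : Mat := fun i j => if Nat.eq_dec i j then 1 else 0.

Definition mser_cv (D : nat) (u : nat -> Mat) (L : Mat) : Prop :=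
  forall i j, (i < D)%nat -> (j < D)%nat ->
    Un_cv (fun N => rsum (S N) (fun n => u n i j)) (L i j).

(** * u-MPS. Alphabet Sigma = {0,...,d-1}; a core tensor of shape (D,d,D) is
    A : nat -> Mat, A c being the matrix A(c). Strings are lists. *)
Definition Aword (D : nat) (A : nat -> Mat) (s : list nat) : Mat :=
  fold_right (fun c M => mmul D (A c) M) mid s.

Definition word_over (d : nat) (s : list nat) : Prop := Forall (fun c => (c < d)%nat) s.

Fixpoint words (d n : nat) : list (list nat) :=
  match n with
  | O => [ [] ]
  | S m => flat_map (fun w => map (fun c => c :: w) (seq 0 d)) (words d m)
  end.

Definition wsum (d n : nat) (F : list nat -> Mat) : Mat :=
  fold_right madd mzero (map F (words d n)).

Inductive regex : Type :=
| RChr (c : nat)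
| RCat (r1 r2 : regex)
| RAlt (r1 r2 : regex)
| RStar (r : regex).

Fixpoint regex_over (d : nat) (r : regex) : Prop :=
  match r with
  | RChr c => (c < d)%nat
  | RCat r1 r2 | RAlt r1 r2 => regex_over d r1 /\ regex_over d r2
  | RStar r1 => regex_over d r1
  end.

(** * Match counts in N u {oo} ( None = oo ) *)
Definition enat := option nat.
Definition eadd (x y : enat) : enat :=
  match x, y with Some a, Some b => Some (a + b)%nat | _, _ => None end.
(* convention 0 * oo = 0 *)
Definition emul (x y : enat) : enat :=
  match x, y with
  | Some O, _ | _, Some O => Some O
  | Some a, Some b => Some (a * b)%nat
  | _, _ => None
  end.
Definition ele (x y : enat) : Prop :=
  match x, y with
  | _, None => True
  | None, Some _ => False
  | Some a, Some b => (a <= b)%nat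
  end.

Fixpoint esum (n : nat) (f : nat -> enat) : enat :=
  match n with O => Some O | S m => eadd (esum m f) (f m) end.

Definition esplit (c1 c2 : list nat -> enat) (s : list nat) : enat :=
  esum (S (length s)) (fun i => emul (c1 (firstn i s)) (c2 (skipn i s))).

Fixpoint pieces (c : list nat -> enat) (n : nat) (s : list nat) : enat :=
  match n with
  | O => match s with [] => Some 1%nat | _ => Some O end
  | S m => esplit c (pieces c m) s
  end.

(** supremum in N u {oo} of a sequence (always exists, unique) *)
Definition is_esup (u : nat -> enat) (k : enat) : Prop :=
  (forall N, ele (u N) k) /\ (forall k', (forall N, ele (u N) k') -> ele k k').

Definition eseries (u : nat -> enat) : enat :=
  epsilon (inhabits None) (is_esup (fun N => esum N u)).

Fixpoint cnt (r : regex) (s : list nat) : enat :=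
  match r with
  | RChr c => match s with [c'] => if Nat.eq_dec c c' then Some 1%nat else Some O
                         | _ => Some O end
  | RCat r1 r2 => esplit (cnt r1) (cnt r2) s
  | RAlt r1 r2 => eadd (cnt r1 s) (cnt r2 s)
  | RStar r1 => eseries (fun n => pieces (cnt r1) n s)
  end.

Definition unambiguous (d : nat) (r : regex) : Prop :=
  forall s, word_over d s -> cnt r s = Some O \/ cnt r s = Some 1%nat.

(** |s|_R as a real coefficient (only used where it is finite) *)
Definition coefR (k : enat) : R := match k with Some n => INR n | None => 0 end.
Definition lang_ind (r : regex) (s : list nat) : R :=
  match cnt r s with Some O => 0 | _ => 1 end.

(** * Generalized transfer operators.  ER D A R f : "E^r_R converges and equals f"
    (every Kleene series arising in the recursion converges). *)
Definition conjR (D : nat) (A : nat -> Mat) (s : list nat) (Q : Mat) : Mat :=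
  mmul D (mmul D (Aword D A s) Q) (mtr (Aword D A s)).
Definition conjL (D : nat) (A : nat -> Mat) (s : list nat) (Q : Mat) : Mat :=
  mmul D (mmul D (mtr (Aword D A s)) Q) (Aword D A s).

Inductive ER (D : nat) (A : nat -> Mat) : regex -> (Mat -> Mat) -> Prop :=
| ER_chr c : ER D A (RChr c) (fun Q => mmul D (mmul D (A c) Q) (mtr (A c)))
| ER_cat r1 r2 f1 f2 : ER D A r1 f1 -> ER D A r2 f2 ->
    ER D A (RCat r1 r2) (fun Q => f1 (f2 Q))
| ER_alt r1 r2 f1 f2 : ER D A r1 f1 -> ER D A r2 f2 ->
    ER D A (RAlt r1 r2) (fun Q => madd (f1 Q) (f2 Q))
| ER_star r f g : ER D A r f ->
    (forall Q, mser_cv D (fun n => Nat.iter n f Q) (g Q)) ->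
    ER D A (RStar r) g.

Inductive EL (D : nat) (A : nat -> Mat) : regex -> (Mat -> Mat) -> Prop :=
| EL_chr c : EL D A (RChr c) (fun Q => mmul D (mmul D (mtr (A c)) Q) (A c))
| EL_cat r1 r2 f1 f2 : EL D A r1 f1 -> EL D A r2 f2 ->
    EL D A (RCat r1 r2) (fun Q => f2 (f1 Q))
| EL_alt r1 r2 f1 f2 : EL D A r1 f1 -> EL D A r2 f2 ->
    EL D A (RAlt r1 r2) (fun Q => madd (f1 Q) (f2 Q))
| EL_star r f g : EL D A r f ->
    (forall Q, mser_cv D (fun n => Nat.iter n f Q) (g Q)) ->
    EL D A (RStar r) g.

Definition conv_r D A R : Prop := exists f, ER D A R f.
Definition conv_l D A R : Prop := exists f, EL D A R f.

(** The transfer operators act entrywise through kernels: [E^r_R(Q)_{ij}] is a combination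
    of the [Q_{kl}] with coefficients [Σ_s |s|_R A(s)_{ik} A(s)_{jl}]. By induction on [R],
    the series [Σ_n Σ_{|s|=n} |s|_R A(s) Q A(s)^T] converges to [E^r_R(Q)]: a union adds the
    series, a concatenation is the Cauchy product of two absolutely convergent series (counts
    of concatenations are convolutions), and a Kleene closure [S*] sums the series of the
    powers [S^n], which regroup into that of [S*] by a dominated Fubini argument. Convergence
    of [Σ_n (E_S)^n] forces [|ε|_S = 0], for otherwise every power keeps the empty word.
    Absolute convergence is governed by [Σ_s |s|_R ‖A(s)‖_F^2], the trace of the series at
    [Q = I] on either side; so whether a Kleene series converges does not depend on the side,
    and left and right convergence are equivalent. *)

From Stdlib Require Import Reals List Arith Lra Lia ClassicalEpsilon FunctionalExtensionality.
From Coquelicot Require Coquelicot.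
Import ListNotations.
Open Scope R_scope.

Lemma rsum_ext n f g : (forall k, (k < n)%nat -> f k = g k) -> rsum n f = rsum n g.
Proof.
  induction n; simpl; intros H; [reflexivity|].
  rewrite IHn, H by (first [lia | intros; apply H; lia]). reflexivity.
Qed.

Lemma rsum_plus n f g : rsum n (fun k => f k + g k) = rsum n f + rsum n g.
Proof. induction n; simpl; [lra|]. rewrite IHn. lra. Qed.

Lemma rsum_minus n f g : rsum n (fun k => f k - g k) = rsum n f - rsum n g.
Proof. induction n; simpl; [lra|]. rewrite IHn. lra. Qed.

Lemma rsum_scal_l n c f : rsum n (fun k => c * f k) = c * rsum n f.
Proof. induction n; simpl; [lra|]. rewrite IHn. lra. Qed.

Lemma rsum_scal_r n c f : rsum n (fun k => f k * c) = rsum n f * c.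
Proof. induction n; simpl; [lra|]. rewrite IHn. lra. Qed.

Lemma rsum_eq_0 n f : (forall k, (k < n)%nat -> f k = 0) -> rsum n f = 0.
Proof.
  induction n; simpl; intros H; [reflexivity|].
  rewrite IHn, H by (first [lia | intros; apply H; lia]). lra.
Qed.

Lemma rsum_swap n m f :
  rsum n (fun i => rsum m (fun j => f i j)) = rsum m (fun j => rsum n (fun i => f i j)).
Proof.
  induction n; simpl.
  - symmetry; apply rsum_eq_0; auto.
  - rewrite IHn, <- rsum_plus. reflexivity.
Qed.

Lemma rsum_swap4 n f :
  rsum n (fun a => rsum n (fun b => rsum n (fun c => rsum n (fun e => f a b c e)))) =
  rsum n (fun c => rsum n (fun e => rsum n (fun a => rsum n (fun b => f a b c e)))).
Proof.
  rewrite (rsum_ext n _ (fun a => rsum n (fun c => rsum n (fun b => rsum n (fun e => f a b c e)))))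
    by (intros; apply rsum_swap).
  rewrite rsum_swap. apply rsum_ext. intros c _.
  rewrite (rsum_ext n _ (fun a => rsum n (fun e => rsum n (fun b => f a b c e))))
    by (intros; apply rsum_swap).
  apply rsum_swap.
Qed.

Lemma rsum_prod n m f g : rsum n f * rsum m g = rsum n (fun i => rsum m (fun j => f i * g j)).
Proof. rewrite <- rsum_scal_r. apply rsum_ext. intros. rewrite <- rsum_scal_l. reflexivity. Qed.

Lemma rsum_const n c : rsum n (fun _ => c) = INR n * c.
Proof. induction n; simpl rsum; [simpl; ring|]. rewrite IHn, S_INR. ring. Qed.

Lemma rsum_le n f g : (forall k, (k < n)%nat -> f k <= g k) -> rsum n f <= rsum n g.
Proof.
  induction n; simpl; intros H; [lra|].
  pose proof (H n ltac:(lia)). pose proof (IHn ltac:(intros; apply H; lia)). lra.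
Qed.

Lemma rsum_nonneg n f : (forall k, (k < n)%nat -> 0 <= f k) -> 0 <= rsum n f.
Proof. intros H. rewrite <- (rsum_eq_0 n (fun _ => 0)) by auto. apply rsum_le, H. Qed.

Lemma rsum_abs n f : Rabs (rsum n f) <= rsum n (fun k => Rabs (f k)).
Proof.
  induction n; simpl.
  - rewrite Rabs_R0; lra.
  - eapply Rle_trans; [apply Rabs_triang|]. lra.
Qed.

Lemma rsum_le_prefix k n f :
  (k <= n)%nat -> (forall i, (k <= i < n)%nat -> 0 <= f i) -> rsum k f <= rsum n f.
Proof.
  intros Hk H. induction n.
  - replace k with 0%nat by lia; lra.
  - destruct (Nat.eq_dec k (S n)); [subst; lra|]. simpl.
    pose proof (IHn ltac:(lia) ltac:(intros; apply H; lia)). pose proof (H n ltac:(lia)). lra.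
Qed.

Lemma rsum_term_le n f k : (forall i, (i < n)%nat -> 0 <= f i) -> (k < n)%nat -> f k <= rsum n f.
Proof.
  intros H Hk. apply Rle_trans with (rsum (S k) f).
  2: apply rsum_le_prefix; [lia | intros; apply H; lia].
  simpl. pose proof (rsum_nonneg k f ltac:(intros; apply H; lia)). lra.
Qed.

Lemma rsum_prefix k n f :
  (k <= n)%nat -> (forall i, (k <= i < n)%nat -> f i = 0) -> rsum k f = rsum n f.
Proof.
  intros Hk H. induction n.
  - replace k with 0%nat by lia. reflexivity.
  - destruct (Nat.eq_dec k (S n)); [subst; reflexivity|]. simpl.
    rewrite <- IHn, H by (first [lia | intros; apply H; lia]). lra.
Qed.

Lemma rsum_single n i f :
  (i < n)%nat -> (forall k, (k < n)%nat -> k <> i -> f k = 0) -> rsum n f = f i.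
Proof.
  induction n; simpl; intros Hi H; [lia|]. destruct (Nat.eq_dec i n).
  - subst. rewrite rsum_eq_0 by (intros; apply H; lia). lra.
  - rewrite IHn, (H n) by (auto; lia). lra.
Qed.

Lemma mid_sym i j : mid i j = mid j i.
Proof. unfold mid. destruct (Nat.eq_dec i j), (Nat.eq_dec j i); congruence. Qed.

Lemma rsum_delta n i (g : nat -> R) :
  (i < n)%nat -> rsum n (fun k => g k * mid i k) = g i.
Proof.
  intros Hi. rewrite (rsum_single _ i); auto.
  - unfold mid. destruct (Nat.eq_dec i i); [ring|lia].
  - intros k _ Hk. unfold mid. destruct (Nat.eq_dec i k); [lia|ring].
Qed.

Lemma rsum_sum_f_R0 N f : rsum (S N) f = sum_f_R0 f N.
Proof. induction N; simpl; [lra|]. simpl in IHN. rewrite <- IHN. reflexivity. Qed.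

Lemma rsum_S_l n f : rsum (S n) f = f 0%nat + rsum n (fun k => f (S k)).
Proof. induction n; simpl in *; [lra|]. rewrite IHn. lra. Qed.

Lemma rsum_rev n f : rsum n f = rsum n (fun i => f (n - S i)%nat).
Proof.
  induction n; [reflexivity|].
  change (rsum (S n) f) with (rsum n f + f n). rewrite rsum_S_l, IHn.
  replace (S n - 1)%nat with n by lia.
  rewrite (rsum_ext n (fun k => f (S n - S (S k))%nat) (fun i => f (n - S i)%nat))
    by (intros; f_equal; lia). lra.
Qed.

Lemma rsum_triangle N a : (forall n m, (m < n)%nat -> a n m = 0) ->
  rsum N (fun m => rsum (S m) (fun n => a n m)) = rsum N (fun n => rsum N (fun m => a n m)).
Proof.
  intros H. rewrite <- rsum_swap. apply rsum_ext. intros m Hm.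
  apply rsum_prefix; [lia|]. intros; apply H; lia.
Qed.

Lemma sum_f_R0_rsum_swap D n (f : nat -> nat -> R) :
  sum_f_R0 (fun a => rsum D (fun k => f a k)) n = rsum D (fun k => sum_f_R0 (fun a => f a k) n).
Proof. rewrite <- rsum_sum_f_R0, rsum_swap. apply rsum_ext. intros; apply rsum_sum_f_R0. Qed.

Lemma infinite_sum_ext a b l : (forall n, a n = b n) -> infinite_sum a l -> infinite_sum b l.
Proof. intros H. replace b with a by (apply functional_extensionality; auto). auto. Qed.

Lemma infinite_sum_0 : infinite_sum (fun _ => 0) 0.
Proof.
  intros eps He; exists 0%nat; intros n _.
  replace (sum_f_R0 (fun _ => 0) n) with 0 by (induction n; simpl; lra).
  unfold Rdist; rewrite Rminus_diag, Rabs_R0; lra.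
Qed.

Lemma infinite_sum_plus a b la lb :
  infinite_sum a la -> infinite_sum b lb -> infinite_sum (fun n => a n + b n) (la + lb).
Proof.
  intros Ha Hb eps He. destruct (CV_plus _ _ _ _ Ha Hb eps He) as [N HN].
  exists N. intros n Hn. rewrite plus_sum. apply HN; auto.
Qed.

Lemma infinite_sum_scal c a l : infinite_sum a l -> infinite_sum (fun n => c * a n) (c * l).
Proof.
  intros Ha. assert (Hc : Un_cv (fun _ => c) c).
  { intros eps He; exists 0%nat; intros; unfold Rdist; rewrite Rminus_diag, Rabs_R0; lra. }
  intros eps He. destruct (CV_mult _ _ _ _ Hc Ha eps He) as [N HN]. exists N. intros n Hn.
  replace (sum_f_R0 (fun n => c * a n) n) with (c * sum_f_R0 a n); [apply HN; auto|].
  rewrite scal_sum. apply sum_eq. intros; ring.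
Qed.

Lemma infinite_sum_rsum K f l : (forall i, (i < K)%nat -> infinite_sum (f i) (l i)) ->
  infinite_sum (fun n => rsum K (fun i => f i n)) (rsum K l).
Proof. induction K; simpl; intros H; [apply infinite_sum_0|]. apply infinite_sum_plus; auto. Qed.

Lemma infinite_sum_single u m : (forall n, n <> m -> u n = 0) -> infinite_sum u (u m).
Proof.
  intros H eps He. exists m. intros n Hn.
  rewrite <- rsum_sum_f_R0, (rsum_single _ m) by (auto; lia).
  unfold Rdist; rewrite Rminus_diag, Rabs_R0; lra.
Qed.

Lemma infinite_sum_le a b la lb :
  (forall n, a n <= b n) -> infinite_sum a la -> infinite_sum b lb -> la <= lb.
Proof. intros H Ha Hb. eapply Rle_cv_lim; [|exact Ha|exact Hb]. intros N; apply sum_Rle; auto. Qed.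

Lemma infinite_sum_nonneg_bounded a B :
  (forall n, 0 <= a n) -> (forall N, sum_f_R0 a N <= B) -> exists l, infinite_sum a l.
Proof.
  intros H HB. destruct (growing_cv (fun N => sum_f_R0 a N)) as [l Hl]; eauto.
  - intros n; simpl; pose proof (H (S n)); lra.
  - exists B; intros x [N ->]; apply HB.
Qed.

Lemma infinite_sum_Series a l : infinite_sum a l -> Coquelicot.Series.Series a = l.
Proof.
  intros H. apply Coquelicot.Series.is_series_unique, Coquelicot.Series.is_series_Reals, H.
Qed.

Lemma infinite_sum_abs_le a l : infinite_sum a l ->
  forall T, infinite_sum (fun n => Rabs (a n)) T -> Rabs l <= T.
Proof.
  intros Ha T HT. eapply Rle_cv_lim; [|exact (cv_cvabs _ _ Ha)|exact HT].
  intros N; apply Rabs_triang_gen.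
Qed.

Lemma infinite_sum_comparison a b lb :
  (forall n, Rabs (a n) <= b n) -> infinite_sum b lb -> exists la, infinite_sum a la.
Proof.
  intros H Hb.
  destruct (Coquelicot.Series.ex_series_Rabs a) as [la Hla].
  - apply (Coquelicot.Series.ex_series_le (K := Coquelicot.Hierarchy.R_AbsRing)
             (V := Coquelicot.Hierarchy.R_CompleteNormedModule) _ b).
    + intros n. unfold Coquelicot.Hierarchy.norm, Coquelicot.Hierarchy.abs; simpl.
      rewrite Rabs_Rabsolu. apply H.
    + exists lb. apply Coquelicot.Series.is_series_Reals, Hb.
  - exists la. apply Coquelicot.Series.is_series_Reals, Hla.
Qed.

Lemma infinite_sum_abs_comparison a b lb :
  (forall n, Rabs (a n) <= b n) -> infinite_sum b lb ->
  exists l, infinite_sum (fun n => Rabs (a n)) l.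
Proof.
  intros H. apply infinite_sum_comparison. intros n. rewrite Rabs_Rabsolu. apply H.
Qed.

Lemma infinite_sum_cauchy_product a b la lb : infinite_sum a la -> infinite_sum b lb ->
  (exists l, infinite_sum (fun n => Rabs (a n)) l) ->
  (exists l, infinite_sum (fun n => Rabs (b n)) l) ->
  infinite_sum (fun n => sum_f_R0 (fun k => a k * b (n - k)%nat) n) (la * lb).
Proof.
  intros Ha Hb [l1 H1] [l2 H2].
  apply Coquelicot.Series.is_series_Reals, Coquelicot.Series.is_series_mult.
  - apply Coquelicot.Series.is_series_Reals; auto.
  - apply Coquelicot.Series.is_series_Reals; auto.
  - exists l1. apply Coquelicot.Series.is_series_Reals; auto.
  - exists l2. apply Coquelicot.Series.is_series_Reals; auto.
Qed.

Lemma eventually_forall_le (P : nat -> nat -> Prop) K :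
  (forall n, (n <= K)%nat -> exists N, forall M, (M >= N)%nat -> P n M) ->
  exists N, forall n M, (n <= K)%nat -> (M >= N)%nat -> P n M.
Proof.
  induction K; intros H.
  - destruct (H 0%nat ltac:(lia)) as [N HN]. exists N. intros n M Hn HM.
    replace n with 0%nat by lia. auto.
  - destruct IHK as [N1 H1]; [intros; apply H; lia|]. destruct (H (S K) ltac:(lia)) as [N2 H2].
    exists (N1 + N2)%nat. intros n M Hn HM.
    destruct (Nat.eq_dec n (S K)); [subst; apply H2; lia | apply H1; lia].
Qed.

Lemma rsum_diff_le K N f h : (K <= N)%nat -> (forall n, (K <= n < N)%nat -> f n <= h n) ->
  rsum N f - rsum K f <= rsum N h - rsum K h.
Proof.
  intros HK H. induction N; [replace K with 0%nat by lia; simpl; lra|].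
  destruct (Nat.eq_dec K (S N)); [subst; lra|]. simpl.
  pose proof (IHN ltac:(lia) ltac:(intros; apply H; lia)). pose proof (H N ltac:(lia)). lra.
Qed.

(** Finitely many rows are truncated accurately for large [N]; the remaining rows are
    controlled by the tail of [Σ T]. *)
Lemma truncated_rows_remainder_vanishes (b : nat -> nat -> R) T L :
  (forall n m, 0 <= b n m) -> (forall n, infinite_sum (b n) (T n)) -> infinite_sum T L ->
  forall eps, eps > 0 -> exists N0, forall N, (N >= N0)%nat ->
    rsum (S N) (fun n => T n - sum_f_R0 (b n) N) < eps.
Proof.
  intros Hb HT HL eps He.
  assert (Hrow : forall n N, 0 <= T n - sum_f_R0 (b n) N <= T n).
  { intros n N. pose proof (cond_pos_sum (b n) N (Hb n)).
    pose proof (sum_incr (b n) N (T n) (HT n) (Hb n)). lra. }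
  destruct (HL (eps / 4) ltac:(lra)) as [K HK].
  set (delta := eps / (4 * INR (S K))).
  assert (Hdelta : 0 < delta)
    by (apply Rdiv_lt_0_compat; [lra|]; pose proof (lt_0_INR (S K) ltac:(lia)); lra).
  destruct (eventually_forall_le (fun n M => T n - sum_f_R0 (b n) M < delta) K) as [N0 HN0].
  { intros n _. destruct (HT n _ Hdelta) as [N HN]. exists N. intros M HM.
    pose proof (Rabs_def2 _ _ (HN M HM)). lra. }
  exists (N0 + K)%nat. intros N HN.
  set (g := fun n => T n - sum_f_R0 (b n) N).
  assert (Hhead : rsum (S K) g <= INR (S K) * delta).
  { rewrite <- rsum_const. apply rsum_le. intros n Hn. left. apply HN0; lia. }
  assert (Hdelta_K : INR (S K) * delta = eps / 4).
  { unfold delta. field. pose proof (lt_0_INR (S K) ltac:(lia)); lra. }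
  assert (Htail : rsum (S N) g - rsum (S K) g <= rsum (S N) T - rsum (S K) T).
  { apply rsum_diff_le; [lia|]. intros n _. apply Hrow. }
  pose proof (Rabs_def2 _ _ (HK N ltac:(lia))). pose proof (Rabs_def2 _ _ (HK K ltac:(lia))).
  rewrite <- !rsum_sum_f_R0 in *. lra.
Qed.

Lemma infinite_sum_triangular_exchange (a b : nat -> nat -> R) F T L :
  (forall n m, (m < n)%nat -> a n m = 0) -> (forall n m, Rabs (a n m) <= b n m) ->
  (forall n, infinite_sum (a n) (F n)) -> (forall n, infinite_sum (b n) (T n)) ->
  infinite_sum T L ->
  exists G, infinite_sum F G /\ infinite_sum (fun m => sum_f_R0 (fun n => a n m) m) G.
Proof.
  intros Hz Hab Ha Hb HL.
  assert (Hb0 : forall n m, 0 <= b n m)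
    by (intros n m; pose proof (Hab n m); pose proof (Rabs_pos (a n m)); lra).
  assert (HFT : forall n, Rabs (F n) <= T n).
  { intros n. destruct (infinite_sum_abs_comparison _ _ _ (Hab n) (Hb n)) as [An HAn].
    pose proof (infinite_sum_abs_le _ _ (Ha n) _ HAn).
    pose proof (infinite_sum_le _ _ _ _ (Hab n) HAn (Hb n)). lra. }
  destruct (infinite_sum_comparison F T L HFT HL) as [G HG]. exists G. split; [exact HG|].
  assert (Hrow : forall n N, Rabs (F n - sum_f_R0 (a n) N) <= T n - sum_f_R0 (b n) N).
  { intros n N. apply (sum_maj1 (fun k _ => a n k) (b n) 0 (F n) (T n) N (Ha n) (Hb n)).
    intros k; apply Hab. }
  intros eps He.
  destruct (truncated_rows_remainder_vanishes b T L Hb0 Hb HL (eps / 2) ltac:(lra)) as [N1 HN1].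
  destruct (HG (eps / 2) ltac:(lra)) as [N2 HN2].
  exists (N1 + N2)%nat. intros N HN.
  assert (Hcols : sum_f_R0 (fun m => sum_f_R0 (fun n => a n m) m) N
                  = rsum (S N) (fun n => sum_f_R0 (a n) N)).
  { rewrite <- rsum_sum_f_R0.
    rewrite (rsum_ext _ _ (fun m => rsum (S m) (fun n => a n m)))
      by (intros; symmetry; apply rsum_sum_f_R0).
    rewrite rsum_triangle by auto. apply rsum_ext. intros; apply rsum_sum_f_R0. }
  assert (Hdiff : Rabs (rsum (S N) (fun n => sum_f_R0 (a n) N) - rsum (S N) F)
                  <= rsum (S N) (fun n => T n - sum_f_R0 (b n) N)).
  { rewrite <- rsum_minus.
    eapply Rle_trans; [apply rsum_abs|]. apply rsum_le. intros n _.
    rewrite Rabs_minus_sym. apply Hrow. }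
  specialize (HN1 N ltac:(lia)). specialize (HN2 N ltac:(lia)). unfold Rdist in *.
  rewrite <- rsum_sum_f_R0 in HN2. rewrite Hcols.
  replace (rsum (S N) (fun n => sum_f_R0 (a n) N) - G)
    with ((rsum (S N) (fun n => sum_f_R0 (a n) N) - rsum (S N) F) + (rsum (S N) F - G)) by ring.
  eapply Rle_lt_trans; [apply Rabs_triang|]. lra.
Qed.

Definition lsum {X} (l : list X) (f : X -> R) : R := fold_right Rplus 0 (map f l).

Section ListSums.
Context {X : Type}.

Lemma lsum_cons (x : X) l f : lsum (x :: l) f = f x + lsum l f.
Proof. reflexivity. Qed.

Lemma lsum_app (l1 l2 : list X) f : lsum (l1 ++ l2) f = lsum l1 f + lsum l2 f.
Proof. induction l1; simpl; [unfold lsum; simpl; lra|]. rewrite !lsum_cons, IHl1. lra. Qed.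

Lemma lsum_ext_in (l : list X) f g : (forall x, In x l -> f x = g x) -> lsum l f = lsum l g.
Proof.
  induction l; intros H; [reflexivity|]. rewrite !lsum_cons, H, IHl; simpl; auto.
  intros; apply H; simpl; auto.
Qed.

Lemma lsum_ext (l : list X) f g : (forall x, f x = g x) -> lsum l f = lsum l g.
Proof. intros; apply lsum_ext_in; auto. Qed.

Lemma lsum_eq_0 (l : list X) f : (forall x, In x l -> f x = 0) -> lsum l f = 0.
Proof.
  induction l; intros H; [reflexivity|]. rewrite lsum_cons, H, IHl; simpl; auto; [lra|].
  intros; apply H; simpl; auto.
Qed.

Lemma lsum_plus (l : list X) f g : lsum l (fun x => f x + g x) = lsum l f + lsum l g.
Proof. induction l; [unfold lsum; simpl; lra|]. rewrite !lsum_cons, IHl. lra. Qed.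

Lemma lsum_scal_l (l : list X) c f : lsum l (fun x => c * f x) = c * lsum l f.
Proof. induction l; [unfold lsum; simpl; lra|]. rewrite !lsum_cons, IHl. lra. Qed.

Lemma lsum_scal_r (l : list X) c f : lsum l (fun x => f x * c) = lsum l f * c.
Proof. induction l; [unfold lsum; simpl; lra|]. rewrite !lsum_cons, IHl. lra. Qed.

Lemma lsum_le (l : list X) f g : (forall x, In x l -> f x <= g x) -> lsum l f <= lsum l g.
Proof.
  induction l; intros H; [unfold lsum; simpl; lra|]. rewrite !lsum_cons.
  pose proof (H a (or_introl eq_refl)). pose proof (IHl ltac:(intros; apply H; right; auto)). lra.
Qed.

Lemma lsum_abs (l : list X) f : Rabs (lsum l f) <= lsum l (fun x => Rabs (f x)).
Proof.
  induction l; [unfold lsum; simpl; rewrite Rabs_R0; lra|]. rewrite !lsum_cons.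
  eapply Rle_trans; [apply Rabs_triang|]. lra.
Qed.

Lemma lsum_rsum (l : list X) K (f : X -> nat -> R) :
  lsum l (fun x => rsum K (fun k => f x k)) = rsum K (fun k => lsum l (fun x => f x k)).
Proof.
  induction l; [symmetry; apply rsum_eq_0; auto|].
  rewrite lsum_cons, IHl, <- rsum_plus. reflexivity.
Qed.

End ListSums.

Lemma lsum_swap {X Y} (l1 : list X) (l2 : list Y) f :
  lsum l1 (fun x => lsum l2 (fun y => f x y)) = lsum l2 (fun y => lsum l1 (fun x => f x y)).
Proof.
  induction l1; [symmetry; apply (lsum_eq_0 l2); reflexivity|].
  rewrite lsum_cons, IHl1, <- lsum_plus. reflexivity.
Qed.

Lemma lsum_flat_map {X Y} (g : X -> list Y) l f :
  lsum (flat_map g l) f = lsum l (fun x => lsum (g x) f).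
Proof. induction l; [reflexivity|]. simpl. rewrite lsum_app, lsum_cons, IHl. reflexivity. Qed.

Lemma lsum_map {X Y} (h : X -> Y) l f : lsum (map h l) f = lsum l (fun x => f (h x)).
Proof. induction l; [reflexivity|]. simpl. rewrite !lsum_cons, IHl. reflexivity. Qed.


Lemma lsum_seq d f : lsum (seq 0 d) f = rsum d f.
Proof.
  induction d; [reflexivity|]. rewrite seq_S, lsum_app, IHd. unfold lsum; simpl. lra.
Qed.

Definition wordsum d n (f : list nat -> R) : R := lsum (words d n) f.

Lemma in_words_length d n s : In s (words d n) -> length s = n.
Proof.
  revert s; induction n; simpl; intros s H; [destruct H as [<-|[]]; reflexivity|].
  apply in_flat_map in H. destruct H as [w [Hw Hs]]. apply in_map_iff in Hs.
  destruct Hs as [c [<- _]]. simpl. f_equal; auto.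
Qed.

Lemma in_words_word_over d n s : In s (words d n) -> word_over d s.
Proof.
  revert s; induction n; simpl; intros s H; [destruct H as [<-|[]]; constructor|].
  apply in_flat_map in H. destruct H as [w [Hw Hs]]. apply in_map_iff in Hs.
  destruct Hs as [c [<- Hc]]. apply in_seq in Hc. constructor; [lia|]. apply IHn; auto.
Qed.

Lemma wordsum_ext d n f g :
  (forall s, length s = n -> word_over d s -> f s = g s) -> wordsum d n f = wordsum d n g.
Proof.
  intros H. apply lsum_ext_in. intros s Hs.
  apply H; [eapply in_words_length | eapply in_words_word_over]; eauto.
Qed.

Lemma wordsum_eq_0 d n f :
  (forall s, length s = n -> f s = 0) -> wordsum d n f = 0.
Proof. intros H. apply lsum_eq_0. intros s Hs. apply H. eapply in_words_length; eauto. Qed.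

Lemma wordsum_0 d f : wordsum d 0 f = f [].
Proof. unfold wordsum, lsum; simpl. lra. Qed.

Lemma wordsum_S d m f : wordsum d (S m) f = rsum d (fun c => wordsum d m (fun w => f (c :: w))).
Proof.
  unfold wordsum; simpl. rewrite lsum_flat_map, <- lsum_seq, lsum_swap.
  apply lsum_ext. intros w. apply lsum_map.
Qed.

Lemma wordsum_1 d f : wordsum d 1 f = rsum d (fun c => f [c]).
Proof. rewrite wordsum_S. apply rsum_ext. intros. apply wordsum_0. Qed.

Lemma wordsum_add d a b f :
  wordsum d (a + b) f = wordsum d a (fun s1 => wordsum d b (fun s2 => f (s1 ++ s2))).
Proof.
  revert f; induction a; intros f; [rewrite wordsum_0; reflexivity|].
  simpl. rewrite !wordsum_S. apply rsum_ext. intros c _. apply IHa.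
Qed.

Lemma wordsum_abs_le d n f g :
  (forall s, word_over d s -> Rabs (f s) <= g s) -> Rabs (wordsum d n f) <= wordsum d n g.
Proof.
  intros H. eapply Rle_trans; [apply lsum_abs|]. apply lsum_le. intros s Hs.
  apply H. eapply in_words_word_over; eauto.
Qed.

Lemma wordsum_nonneg d n f : (forall s, word_over d s -> 0 <= f s) -> 0 <= wordsum d n f.
Proof.
  intros H. unfold wordsum. rewrite <- (lsum_eq_0 (words d n) (fun _ => 0)) by auto.
  apply lsum_le. intros s Hs. apply H. eapply in_words_word_over; eauto.
Qed.

Lemma wsum_entry d n F i j : wsum d n F i j = wordsum d n (fun s => F s i j).
Proof.
  unfold wsum, wordsum, lsum. induction (words d n) as [|x l IH]; simpl; [reflexivity|].
  unfold madd at 1. rewrite IH. reflexivity.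
Qed.

(** * Kernels acting on matrices, and their series over words *)

(** A kernel attaches to every word [s] the linear map [kact κ s] on matrices with
    [(kact κ s Q) i j = Σ_{k,l<D} Q k l * κ s i j k l]; both conjugations
    [Q ↦ A(s) Q A(s)^T] and [Q ↦ A(s)^T Q A(s)] have this form. *)
Definition kernel := list nat -> nat -> nat -> nat -> nat -> R.

Definition nonneg_on d (w : list nat -> R) : Prop := forall s, word_over d s -> 0 <= w s.

Definition mabs D (Q : Mat) : R := rsum D (fun k => rsum D (fun l => Rabs (Q k l))).

Lemma mabs_nonneg D Q : 0 <= mabs D Q.
Proof. apply rsum_nonneg; intros; apply rsum_nonneg; intros; apply Rabs_pos. Qed.

Definition wconv (u v : list nat -> R) s : R :=
  rsum (S (length s)) (fun a => u (firstn a s) * v (skipn a s)).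

Definition wtotal (p : nat -> list nat -> R) s : R := rsum (S (length s)) (fun n => p n s).

Definition vanishes_below_length (p : nat -> list nat -> R) : Prop :=
  forall n s, (length s < n)%nat -> p n s = 0.

Lemma wordsum_wconv d u v n X : wordsum d n (fun s => wconv u v s * X s) =
  sum_f_R0 (fun a => wordsum d a (fun s1 =>
    u s1 * wordsum d (n - a) (fun s2 => v s2 * X (s1 ++ s2)))) n.
Proof.
  rewrite (wordsum_ext d n _ (fun s => rsum (S n) (fun a => u (firstn a s) * v (skipn a s) * X s)))
    by (intros s Hs _; unfold wconv; rewrite Hs, rsum_scal_r; reflexivity).
  unfold wordsum at 1. rewrite lsum_rsum, <- rsum_sum_f_R0. apply rsum_ext. intros a Ha.
  fold (wordsum d n (fun s => u (firstn a s) * v (skipn a s) * X s)).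
  replace n with (a + (n - a))%nat at 1 by lia. rewrite wordsum_add.
  apply wordsum_ext. intros s1 Hs1 _. unfold wordsum at 2. rewrite <- lsum_scal_l.
  apply lsum_ext. intros s2. subst a.
  rewrite firstn_app, skipn_app, firstn_all, skipn_all, Nat.sub_diag, firstn_O, app_nil_r.
  simpl. ring.
Qed.

Section Kernel.
Variables (d D : nat) (κ : kernel).

Definition kact s (Q : Mat) : Mat :=
  fun i j => rsum D (fun k => rsum D (fun l => Q k l * κ s i j k l)).

Definition layer (w : list nat -> R) n (Q : Mat) : Mat :=
  fun i j => wordsum d n (fun s => w s * kact s Q i j).

Definition layers_cv (w : list nat -> R) (F : Mat -> Mat) : Prop :=
  forall Q i j, (i < D)%nat -> (j < D)%nat -> infinite_sum (fun n => layer w n Q i j) (F Q i j).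

Definition summable (φ : list nat -> R) (w : list nat -> R) : Prop :=
  exists l, infinite_sum (fun n => wordsum d n (fun s => w s * φ s)) l.

(** [φ s] bounds the coefficients of [κ s] and is the trace of [kact κ s] applied to the
    identity: for conjugation kernels it is the squared Frobenius norm of [A(s)]. *)
Record dominated (φ : list nat -> R) : Prop := {
  dominated_nonneg : forall s, 0 <= φ s;
  dominated_bound : forall s i j k l, (i < D)%nat -> (j < D)%nat -> (k < D)%nat -> (l < D)%nat ->
    Rabs (κ s i j k l) <= φ s;
  dominated_trace : forall s, rsum D (fun i => rsum D (fun k => κ s i i k k)) = φ s }.

Lemma layer_plus u v n Q i j :
  layer (fun s => u s + v s) n Q i j = layer u n Q i j + layer v n Q i j.
Proof. unfold layer, wordsum. rewrite <- lsum_plus. apply lsum_ext. intros; ring. Qed.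

Lemma kact_layer s v b Q i j :
  kact s (layer v b Q) i j = wordsum d b (fun t => v t * kact s (kact t Q) i j).
Proof.
  unfold kact at 1, layer, wordsum.
  rewrite (rsum_ext _ _ (fun k => lsum (words d b)
             (fun t => rsum D (fun l => v t * kact t Q k l * κ s i j k l)))).
  - rewrite <- lsum_rsum. apply lsum_ext. intros t. unfold kact at 2. rewrite <- rsum_scal_l.
    apply rsum_ext. intros k _. rewrite <- rsum_scal_l. apply rsum_ext. intros; ring.
  - intros k _. rewrite lsum_rsum. apply rsum_ext. intros l _. rewrite <- lsum_scal_r. reflexivity.
Qed.

Lemma kact_comp s t u Q i j : (i < D)%nat -> (j < D)%nat ->
  (forall k l, (k < D)%nat -> (l < D)%nat ->
     κ u i j k l = rsum D (fun k' => rsum D (fun l' => κ s i j k' l' * κ t k' l' k l))) ->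
  kact s (kact t Q) i j = kact u Q i j.
Proof.
  intros Hi Hj H. unfold kact.
  rewrite (rsum_ext D (fun k => rsum D (fun l => Q k l * κ u i j k l))
    (fun k => rsum D (fun l => rsum D (fun k' => rsum D (fun l' =>
       Q k l * κ s i j k' l' * κ t k' l' k l))))).
  - rewrite <- rsum_swap4. apply rsum_ext. intros k' _. apply rsum_ext. intros l' _.
    rewrite <- rsum_scal_r. apply rsum_ext. intros k _. rewrite <- rsum_scal_r.
    apply rsum_ext. intros; ring.
  - intros k Hk. apply rsum_ext. intros l Hl. rewrite H, <- rsum_scal_l by auto. apply rsum_ext.
    intros. rewrite <- rsum_scal_l. apply rsum_ext. intros; ring.
Qed.

Lemma layer_coefficients u a X i j :
  layer u a X i j =
  rsum D (fun k => rsum D (fun l => X k l * wordsum d a (fun s => u s * κ s i j k l))).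
Proof.
  unfold layer, kact, wordsum.
  rewrite (lsum_ext _ _ (fun s =>
             rsum D (fun k => rsum D (fun l => X k l * (u s * κ s i j k l))))).
  - rewrite lsum_rsum. apply rsum_ext; intros. rewrite lsum_rsum. apply rsum_ext; intros.
    apply lsum_scal_l.
  - intros s. rewrite <- rsum_scal_l. apply rsum_ext; intros. rewrite <- rsum_scal_l.
    apply rsum_ext; intros. ring.
Qed.

Lemma kact_mid s i : (i < D)%nat -> kact s mid i i = rsum D (fun k => κ s i i k k).
Proof.
  intros Hi. apply rsum_ext. intros k Hk.
  rewrite (rsum_ext _ _ (fun l => κ s i i k l * mid k l)) by (intros; ring).
  apply rsum_delta; auto.
Qed.

Lemma layers_cv_ext w F G : (forall Q i j, (i < D)%nat -> (j < D)%nat -> F Q i j = G Q i j) ->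
  layers_cv w F -> layers_cv w G.
Proof. intros H HF Q i j Hi Hj. rewrite <- H by auto. apply HF; auto. Qed.

Lemma layers_cv_weight_ext w v F : (forall s, word_over d s -> w s = v s) ->
  layers_cv w F -> layers_cv v F.
Proof.
  intros H HF Q i j Hi Hj. eapply infinite_sum_ext; [|apply HF; auto].
  intros n. apply wordsum_ext. intros s _ Hs. unfold layer. rewrite H; auto.
Qed.

Lemma layers_cv_unit w : (forall Q i j, (i < D)%nat -> (j < D)%nat -> kact [] Q i j = Q i j) ->
  w [] = 1 -> (forall s, s <> [] -> w s = 0) -> layers_cv w (fun Q => Q).
Proof.
  intros Hid H1 H0 Q i j Hi Hj.
  replace (Q i j) with (layer w 0 Q i j)
    by (unfold layer; rewrite wordsum_0, H1, Hid by auto; ring).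
  apply (infinite_sum_single (fun n => layer w n Q i j)). intros n Hn.
  apply wordsum_eq_0. intros s Hs. rewrite H0; [ring|]. intros ->. simpl in Hs. lia.
Qed.


Definition right_multiplicative : Prop :=
  forall s t Q i j, (i < D)%nat -> (j < D)%nat -> kact s (kact t Q) i j = kact (s ++ t) Q i j.

Definition left_multiplicative : Prop :=
  forall s t Q i j, (i < D)%nat -> (j < D)%nat -> kact t (kact s Q) i j = kact (s ++ t) Q i j.

Lemma layer_wconv_right u v n Q i j : right_multiplicative -> (i < D)%nat -> (j < D)%nat ->
  layer (wconv u v) n Q i j = sum_f_R0 (fun a => layer u a (layer v (n - a) Q) i j) n.
Proof.
  intros Hmul Hi Hj. unfold layer at 1. rewrite wordsum_wconv. apply sum_eq. intros a _.
  unfold layer at 1. apply wordsum_ext. intros s1 _ _. f_equal.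
  rewrite kact_layer. apply wordsum_ext. intros s2 _ _. rewrite Hmul; auto.
Qed.

Lemma layer_wconv_left u v n Q i j : left_multiplicative -> (i < D)%nat -> (j < D)%nat ->
  layer (wconv u v) n Q i j = sum_f_R0 (fun a => layer v a (layer u (n - a) Q) i j) n.
Proof.
  intros Hmul Hi Hj. unfold layer at 1. rewrite wordsum_wconv, <- !rsum_sum_f_R0, rsum_rev.
  apply rsum_ext. intros a Ha.
  replace (S n - S a)%nat with (n - a)%nat by lia. replace (n - (n - a))%nat with a by lia.
  unfold layer at 1. rewrite (wordsum_ext d a _ (fun s2 => wordsum d (n - a)
                        (fun s1 => v s2 * (u s1 * kact (s1 ++ s2) Q i j)))).
  - unfold wordsum. rewrite lsum_swap. apply lsum_ext. intros s1. rewrite <- lsum_scal_l.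
    apply lsum_ext. intros s2. ring.
  - intros s2 _ _. rewrite kact_layer. unfold wordsum. rewrite <- lsum_scal_l.
    apply lsum_ext. intros s1. rewrite Hmul by auto. reflexivity.
Qed.
Section Dominated.
Variable φ : list nat -> R.
Hypothesis Hdom : dominated φ.

Lemma kact_bound s Q i j : (i < D)%nat -> (j < D)%nat -> Rabs (kact s Q i j) <= mabs D Q * φ s.
Proof.
  intros Hi Hj. unfold kact, mabs. eapply Rle_trans; [apply rsum_abs|].
  rewrite <- rsum_scal_r. apply rsum_le. intros k Hk. eapply Rle_trans; [apply rsum_abs|].
  rewrite <- rsum_scal_r. apply rsum_le. intros l Hl. rewrite Rabs_mult.
  apply Rmult_le_compat_l; [apply Rabs_pos|]. apply Hdom; auto.
Qed.

Lemma layer_bound w n Q i j : nonneg_on d w -> (i < D)%nat -> (j < D)%nat ->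
  Rabs (layer w n Q i j) <= mabs D Q * wordsum d n (fun s => w s * φ s).
Proof.
  intros Hw Hi Hj. unfold layer. unfold wordsum at 2. rewrite <- lsum_scal_l.
  apply wordsum_abs_le. intros s Hs. rewrite Rabs_mult, Rabs_pos_eq by auto.
  pose proof (kact_bound s Q i j Hi Hj). pose proof (Hw s Hs). pose proof (mabs_nonneg D Q).
  pose proof (Rabs_pos (kact s Q i j)). nra.
Qed.

Lemma layer_coefficient_bound u a i j k l : nonneg_on d u ->
  (i < D)%nat -> (j < D)%nat -> (k < D)%nat -> (l < D)%nat ->
  Rabs (wordsum d a (fun s => u s * κ s i j k l)) <= wordsum d a (fun s => u s * φ s).
Proof.
  intros Hu Hi Hj Hk Hl. apply wordsum_abs_le. intros s Hs. rewrite Rabs_mult, Rabs_pos_eq by auto.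
  apply Rmult_le_compat_l; auto. apply Hdom; auto.
Qed.

Lemma layer_trace w n : rsum D (fun i => layer w n mid i i) = wordsum d n (fun s => w s * φ s).
Proof.
  unfold layer, wordsum. rewrite <- lsum_rsum. apply lsum_ext. intros s.
  rewrite rsum_scal_l, <- (dominated_trace _ Hdom s). f_equal. apply rsum_ext. intros i Hi.
  apply kact_mid; auto.
Qed.

Lemma layers_cv_trace w F : layers_cv w F ->
  infinite_sum (fun n => wordsum d n (fun s => w s * φ s)) (rsum D (fun i => F mid i i)).
Proof.
  intros HF. eapply infinite_sum_ext; [intros n; apply layer_trace|].
  apply infinite_sum_rsum. intros i Hi. apply HF; auto.
Qed.

Lemma layers_cv_summable w F : layers_cv w F -> summable φ w.
Proof. intros HF. eexists. apply layers_cv_trace, HF. Qed.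

(** Absolute convergence of both factors lets the Cauchy product of the two layer series be
    formed entry by entry. *)
Lemma layers_cv_comp u v z F1 F2 : nonneg_on d u -> nonneg_on d v ->
  layers_cv u F1 -> layers_cv v F2 ->
  (forall n Q i j, (i < D)%nat -> (j < D)%nat ->
     layer z n Q i j = sum_f_R0 (fun a => layer u a (layer v (n - a) Q) i j) n) ->
  layers_cv z (fun Q => F1 (F2 Q)).
Proof.
  intros Hu Hv H1 H2 Hz Q i j Hi Hj.
  destruct (layers_cv_summable u F1 H1) as [lu Hlu].
  destruct (layers_cv_summable v F2 H2) as [lv Hlv].
  set (α := fun k l a => wordsum d a (fun s => u s * κ s i j k l)).
  set (A := fun k l => Coquelicot.Series.Series (α k l)).
  set (X := F2 Q).
  assert (HA : forall k l, (k < D)%nat -> (l < D)%nat ->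
            infinite_sum (α k l) (A k l) /\ exists m, infinite_sum (fun a => Rabs (α k l a)) m).
  { intros k l Hk Hl.
    assert (Hb : forall a, Rabs (α k l a) <= wordsum d a (fun s => u s * φ s))
      by (intros; apply layer_coefficient_bound; auto).
    destruct (infinite_sum_comparison _ _ _ Hb Hlu) as [la Hla].
    split; [unfold A; rewrite (infinite_sum_Series _ la); auto|].
    apply (infinite_sum_abs_comparison _ _ _ Hb Hlu). }
  assert (HB : forall k l, (k < D)%nat -> (l < D)%nat ->
            exists m, infinite_sum (fun b => Rabs (layer v b Q k l)) m).
  { intros k l Hk Hl.
    apply (infinite_sum_abs_comparison _ _ (mabs D Q * lv)
             (fun b => layer_bound v b Q k l Hv Hk Hl)).
    apply infinite_sum_scal, Hlv. }
  assert (HF1 : F1 X i j = rsum D (fun k => rsum D (fun l => X k l * A k l))).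
  { apply (uniqueness_sum (fun a => layer u a X i j)); [apply H1; auto|].
    eapply infinite_sum_ext; [intros a; symmetry; apply layer_coefficients|].
    apply infinite_sum_rsum. intros k Hk. apply infinite_sum_rsum. intros l Hl.
    apply infinite_sum_scal, HA; auto. }
  simpl. fold X. rewrite HF1.
  assert (Hlayers : forall n, rsum D (fun k => rsum D (fun l =>
             sum_f_R0 (fun a => α k l a * layer v (n - a) Q k l) n)) = layer z n Q i j).
  { intros n. rewrite Hz by auto.
    rewrite (sum_eq _ (fun a =>
               rsum D (fun k => rsum D (fun l => layer v (n - a) Q k l * α k l a))))
      by (intros; apply layer_coefficients).
    rewrite sum_f_R0_rsum_swap. apply rsum_ext; intros. rewrite sum_f_R0_rsum_swap.
    apply rsum_ext; intros. apply sum_eq; intros. apply Rmult_comm. }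
  apply (infinite_sum_ext _ _ _ Hlayers).
  apply infinite_sum_rsum. intros k Hk. apply infinite_sum_rsum. intros l Hl.
  rewrite Rmult_comm. destruct (HA k l Hk Hl) as [HA1 HA2].
  apply (infinite_sum_cauchy_product (α k l) (fun b => layer v b Q k l));
    [exact HA1 | apply H2; auto | exact HA2 | apply HB; auto].
Qed.


Lemma wordsum_wtotal p g m : vanishes_below_length p ->
  rsum (S m) (fun n => wordsum d m (fun s => p n s * g s)) =
  wordsum d m (fun s => wtotal p s * g s).
Proof.
  intros Hp. unfold wordsum. rewrite <- lsum_rsum. apply lsum_ext_in. intros s Hs.
  apply in_words_length in Hs. unfold wtotal. rewrite Hs, <- rsum_scal_r. reflexivity.
Qed.

Lemma layer_wtotal p m Q i j : vanishes_below_length p ->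
  sum_f_R0 (fun n => layer (p n) m Q i j) m = layer (wtotal p) m Q i j.
Proof. intros Hp. rewrite <- rsum_sum_f_R0. apply wordsum_wtotal, Hp. Qed.

Section Star.
Variables (p : nat -> list nat -> R) (It : nat -> Mat -> Mat).
Hypotheses (Hp_nonneg : forall n, nonneg_on d (p n)) (Hp_support : vanishes_below_length p)
  (Hp_cv : forall n, layers_cv (p n) (It n)).

Lemma weighted_wordsum_nonneg n m : 0 <= wordsum d m (fun s => p n s * φ s).
Proof.
  apply wordsum_nonneg. intros s Hs.
  pose proof (Hp_nonneg n s Hs). pose proof (dominated_nonneg _ Hdom s). nra.
Qed.

Lemma iterates_trace_nonneg n : 0 <= rsum D (fun i => It n mid i i).
Proof.
  apply (infinite_sum_le (fun _ => 0) (fun m => wordsum d m (fun s => p n s * φ s)) 0);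
    [apply weighted_wordsum_nonneg|apply infinite_sum_0|apply layers_cv_trace, Hp_cv].
Qed.

(** In the star, [p n] are the weights of the splittings into [n] pieces: the double series
    [Σ_n Σ_m layer (p n) m] is upper triangular and dominated by the traces of the [It n]. *)
Lemma layers_wtotal_exchange :
  (exists L, infinite_sum (fun n => rsum D (fun i => It n mid i i)) L) ->
  forall Q i j, (i < D)%nat -> (j < D)%nat -> exists G,
    infinite_sum (fun n => It n Q i j) G /\ infinite_sum (fun m => layer (wtotal p) m Q i j) G.
Proof.
  intros [L HL] Q i j Hi Hj.
  destruct (infinite_sum_triangular_exchange (fun n m => layer (p n) m Q i j)
              (fun n m => mabs D Q * wordsum d m (fun s => p n s * φ s))
              (fun n => It n Q i j) (fun n => mabs D Q * rsum D (fun i => It n mid i i))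
              (mabs D Q * L))
    as [G [HG1 HG2]].
  - intros n m Hnm. apply wordsum_eq_0. intros s Hs. rewrite Hp_support by lia. ring.
  - intros n m. apply layer_bound; auto.
  - intros n. apply Hp_cv; auto.
  - intros n. apply infinite_sum_scal, layers_cv_trace, Hp_cv.
  - apply infinite_sum_scal, HL.
  - exists G. split; auto. eapply infinite_sum_ext; [|exact HG2].
    intros m. apply layer_wtotal, Hp_support.
Qed.

Lemma layers_cv_wtotal g :
  (forall Q i j, (i < D)%nat -> (j < D)%nat -> infinite_sum (fun n => It n Q i j) (g Q i j)) ->
  layers_cv (wtotal p) g.
Proof.
  intros Hg Q i j Hi Hj.
  destruct (layers_wtotal_exchange) with (Q := Q) (i := i) (j := j) as [G [H1 H2]]; auto.
  - exists (rsum D (fun i => g mid i i)). apply infinite_sum_rsum. intros; apply Hg; auto.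
  - rewrite (uniqueness_sum _ _ _ (Hg Q i j Hi Hj) H1). exact H2.
Qed.

Lemma iterates_cv_of_summable_wtotal : summable φ (wtotal p) ->
  forall Q i j, (i < D)%nat -> (j < D)%nat -> exists G, infinite_sum (fun n => It n Q i j) G.
Proof.
  intros [SW HSW] Q i j Hi Hj.
  destruct (layers_wtotal_exchange) with (Q := Q) (i := i) (j := j) as [G [H1 _]]; eauto.
  apply (infinite_sum_nonneg_bounded _ SW); [apply iterates_trace_nonneg|]. intros N.
  assert (HN : infinite_sum (fun m => rsum (S N) (fun n => wordsum d m (fun s => p n s * φ s)))
                 (rsum (S N) (fun n => rsum D (fun i => It n mid i i))))
    by (apply infinite_sum_rsum; intros; apply layers_cv_trace, Hp_cv).
  rewrite <- rsum_sum_f_R0.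
  eapply Rle_cv_lim; [|exact HN|exact HSW]. intros M.
  rewrite <- !rsum_sum_f_R0. apply rsum_le. intros m _.
  rewrite <- (wordsum_wtotal p φ m Hp_support).
  destruct (le_lt_dec N m).
  - apply rsum_le_prefix; [lia|]. intros; apply weighted_wordsum_nonneg.
  - right. symmetry. apply rsum_prefix; [lia|]. intros n Hn. apply wordsum_eq_0. intros s Hs.
    rewrite Hp_support by lia. ring.
Qed.

(** Every iterate keeps the empty word with weight at least [1], so its trace is at least
    [φ []] and the series of iterates cannot converge. *)
Lemma iterates_not_cv_of_empty_word :
  (forall Q i j, (i < D)%nat -> (j < D)%nat -> exists G, infinite_sum (fun n => It n Q i j) G) ->
  (forall n, 1 <= p n []) -> 0 < φ [] -> False.
Proof.
  intros Hcv H1 Hφ.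
  set (tr := fun n => rsum D (fun i => It n mid i i)).
  set (total := rsum D (fun i => Coquelicot.Series.Series (fun n => It n mid i i))).
  assert (Htr : infinite_sum tr total).
  { apply infinite_sum_rsum. intros i Hi. destruct (Hcv mid i i Hi Hi) as [G HG].
    rewrite (infinite_sum_Series _ G); auto. }
  assert (Htr_ge : forall n, φ [] <= tr n).
  { intros n. pose proof (sum_incr _ 0 _ (layers_cv_trace _ _ (Hp_cv n))) as H.
    simpl in H. rewrite wordsum_0 in H. pose proof (H1 n). pose proof (dominated_nonneg _ Hdom []).
    unfold tr. apply Rle_trans with (p n [] * φ []); [nra|]. apply H, weighted_wordsum_nonneg. }
  destruct (INR_archimed (φ []) total) as [N HN]; [lra|].
  pose proof (sum_incr tr N _ Htr ltac:(intros n; pose proof (Htr_ge n); lra)).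
  assert (Hlow : forall M, INR (S M) * φ [] <= sum_f_R0 tr M).
  { induction M; [simpl; pose proof (Htr_ge 0%nat); lra|].
    rewrite S_INR. simpl sum_f_R0. pose proof (Htr_ge (S M)). lra. }
  pose proof (Hlow N). rewrite S_INR in *. lra.
Qed.

End Star.
End Dominated.
End Kernel.

(** * The conjugation kernels of a u-MPS *)

Lemma mmul_conj_r D M Q i j :
  mmul D (mmul D M Q) (mtr M) i j = rsum D (fun k => rsum D (fun l => Q k l * (M i k * M j l))).
Proof.
  unfold mmul, mtr. rewrite rsum_swap. apply rsum_ext. intros l _.
  rewrite <- rsum_scal_r. apply rsum_ext. intros; ring.
Qed.

Lemma mmul_conj_l D M Q i j :
  mmul D (mmul D (mtr M) Q) M i j = rsum D (fun k => rsum D (fun l => Q k l * (M k i * M l j))).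
Proof. apply mmul_conj_r. Qed.

Section Conjugation.
Variables (D : nat) (A : nat -> Mat).

Definition conj_kernel_r : kernel := fun s i j k l => Aword D A s i k * Aword D A s j l.
Definition conj_kernel_l : kernel := fun s i j k l => Aword D A s k i * Aword D A s l j.
Definition frob2 s : R := rsum D (fun i => rsum D (fun k => Aword D A s i k * Aword D A s i k)).

Lemma Aword_app s1 s2 i k : (i < D)%nat ->
  Aword D A (s1 ++ s2) i k = rsum D (fun m => Aword D A s1 i m * Aword D A s2 m k).
Proof.
  revert i k. induction s1 as [|c s1 IH]; intros i k Hi; simpl.
  - rewrite (rsum_ext _ _ (fun m => Aword D A s2 m k * mid i m)), rsum_delta
      by (auto; intros; ring).
    reflexivity.
  - unfold mmul.
    rewrite (rsum_ext _ _ (fun m =>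
               rsum D (fun m' => A c i m * Aword D A s1 m m' * Aword D A s2 m' k)))
      by (intros; rewrite IH, <- rsum_scal_l by auto; apply rsum_ext; intros; ring).
    rewrite rsum_swap. apply rsum_ext. intros m _. rewrite <- rsum_scal_r. reflexivity.
Qed.

Lemma Aword_single c i k : (k < D)%nat -> Aword D A [c] i k = A c i k.
Proof. intros Hk. simpl. unfold mmul. rewrite (rsum_ext _ _ (fun m => A c i m * mid k m)).
  - rewrite rsum_delta; auto.
  - intros m _. rewrite mid_sym. reflexivity.
Qed.

Lemma frob2_nil : frob2 [] = INR D.
Proof.
  unfold frob2. rewrite <- (Rmult_1_r (INR D)), <- rsum_const. apply rsum_ext. intros i Hi.
  simpl. rewrite rsum_delta by exact Hi. unfold mid. destruct (Nat.eq_dec i i); [ring|lia].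
Qed.

Lemma Aword_sq_le_frob2 s i k :
  (i < D)%nat -> (k < D)%nat -> Aword D A s i k * Aword D A s i k <= frob2 s.
Proof.
  intros Hi Hk. unfold frob2.
  eapply Rle_trans; [|apply (rsum_term_le D _ i); [intros; apply rsum_nonneg; intros; nra|auto]].
  apply (rsum_term_le D (fun k => Aword D A s i k * Aword D A s i k) k); auto. intros; nra.
Qed.

Lemma Rabs_mult_le_of_sq x y c : x * x <= c -> y * y <= c -> Rabs (x * y) <= c.
Proof.
  intros Hx Hy. rewrite Rabs_mult.
  assert (Rabs x * Rabs x = x * x) by (rewrite <- Rabs_mult; apply Rabs_pos_eq; nra).
  assert (Rabs y * Rabs y = y * y) by (rewrite <- Rabs_mult; apply Rabs_pos_eq; nra).
  pose proof (Rabs_pos x). pose proof (Rabs_pos y). nra.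
Qed.

Lemma frob2_nonneg s : 0 <= frob2 s.
Proof. apply rsum_nonneg; intros; apply rsum_nonneg; intros; nra. Qed.

Lemma dominated_conj_kernel_r : dominated D conj_kernel_r frob2.
Proof.
  split; [apply frob2_nonneg| |reflexivity].
  intros s i j k l Hi Hj Hk Hl. apply Rabs_mult_le_of_sq; apply Aword_sq_le_frob2; auto.
Qed.

Lemma dominated_conj_kernel_l : dominated D conj_kernel_l frob2.
Proof.
  split; [apply frob2_nonneg| |intros; apply rsum_swap].
  intros s i j k l Hi Hj Hk Hl. apply Rabs_mult_le_of_sq; apply Aword_sq_le_frob2; auto.
Qed.

Lemma right_multiplicative_conj_kernel_r : right_multiplicative D conj_kernel_r.
Proof.
  intros s t Q i j Hi Hj. apply kact_comp; auto. intros k l Hk Hl. unfold conj_kernel_r.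
  rewrite !Aword_app, rsum_prod by auto. apply rsum_ext; intros; apply rsum_ext; intros; ring.
Qed.

Lemma left_multiplicative_conj_kernel_l : left_multiplicative D conj_kernel_l.
Proof.
  intros s t Q i j Hi Hj. apply kact_comp; auto. intros k l Hk Hl. unfold conj_kernel_l.
  rewrite !Aword_app, rsum_prod by auto. apply rsum_ext; intros; apply rsum_ext; intros; ring.
Qed.

Lemma kact_nil_conj_kernel_r Q i j :
  (i < D)%nat -> (j < D)%nat -> kact D conj_kernel_r [] Q i j = Q i j.
Proof.
  intros Hi Hj. unfold kact, conj_kernel_r. simpl.
  rewrite (rsum_ext _ _ (fun k => Q k j * mid i k)), rsum_delta; auto.
  intros k _. rewrite (rsum_ext _ _ (fun l => Q k l * mid i k * mid j l)), rsum_delta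
    by (auto; intros; ring).
  ring.
Qed.

Lemma kact_nil_conj_kernel_l Q i j :
  (i < D)%nat -> (j < D)%nat -> kact D conj_kernel_l [] Q i j = Q i j.
Proof.
  intros Hi Hj. rewrite <- (kact_nil_conj_kernel_r Q i j Hi Hj). apply rsum_ext. intros k _.
  apply rsum_ext. intros l _. unfold conj_kernel_l, conj_kernel_r; simpl.
  rewrite (mid_sym k i), (mid_sym l j). reflexivity.
Qed.

Lemma conjR_kact s Q i j : conjR D A s Q i j = kact D conj_kernel_r s Q i j.
Proof. apply mmul_conj_r. Qed.

Lemma conjL_kact s Q i j : conjL D A s Q i j = kact D conj_kernel_l s Q i j.
Proof. apply mmul_conj_l. Qed.

Lemma conj_chr_r c Q i j : mmul D (mmul D (A c) Q) (mtr (A c)) i j = kact D conj_kernel_r [c] Q i j.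
Proof.
  rewrite mmul_conj_r. apply rsum_ext; intros k Hk; apply rsum_ext; intros l Hl.
  unfold conj_kernel_r. rewrite !Aword_single; auto.
Qed.

Lemma conj_chr_l c Q i j : (i < D)%nat -> (j < D)%nat ->
  mmul D (mmul D (mtr (A c)) Q) (A c) i j = kact D conj_kernel_l [c] Q i j.
Proof.
  intros Hi Hj. rewrite mmul_conj_l. apply rsum_ext; intros k Hk; apply rsum_ext; intros l Hl.
  unfold conj_kernel_l. rewrite !Aword_single; auto.
Qed.

End Conjugation.

(** * Match counts as weights *)

Definition finite_on d (c : list nat -> enat) : Prop := forall s, word_over d s -> c s <> None.

Lemma word_over_firstn d s i : word_over d s -> word_over d (firstn i s).
Proof. unfold word_over. intros H. rewrite <- (firstn_skipn i s), Forall_app in H. tauto. Qed.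

Lemma word_over_skipn d s i : word_over d s -> word_over d (skipn i s).
Proof. unfold word_over. intros H. rewrite <- (firstn_skipn i s), Forall_app in H. tauto. Qed.

Lemma coefR_nonneg x : 0 <= coefR x.
Proof. destruct x; simpl; [apply pos_INR|lra]. Qed.

Lemma coefR_eadd x y :
  x <> None -> y <> None -> eadd x y <> None /\ coefR (eadd x y) = coefR x + coefR y.
Proof. destruct x, y; simpl; try congruence. split; [discriminate|]. apply plus_INR. Qed.

Lemma coefR_emul x y :
  x <> None -> y <> None -> emul x y <> None /\ coefR (emul x y) = coefR x * coefR y.
Proof.
  destruct x as [[|a]|], y as [[|b]|]; cbn -[INR Nat.mul]; try congruence;
    split; try discriminate; rewrite ?mult_INR; simpl; ring.
Qed.

Lemma coefR_esum n f : (forall i, (i < n)%nat -> f i <> None) ->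
  esum n f <> None /\ coefR (esum n f) = rsum n (fun i => coefR (f i)).
Proof.
  induction n; intros H; [split; [discriminate|reflexivity]|].
  destruct IHn as [Hfin Hval]; [intros; apply H; lia|]. simpl.
  destruct (coefR_eadd (esum n f) (f n)) as [H1 H2]; auto. rewrite H2, Hval. auto.
Qed.

Lemma eadd_0_r x : eadd x (Some O) = x.
Proof. destruct x; simpl; auto. rewrite Nat.add_0_r. reflexivity. Qed.

Lemma emul_Some a b : emul (Some a) (Some b) = Some (a * b)%nat.
Proof. destruct a, b; simpl; f_equal; lia. Qed.

Lemma emul_0_l y : emul (Some O) y = Some O.
Proof. reflexivity. Qed.

Lemma emul_0_r x : emul x (Some O) = Some O.
Proof. destruct x as [[|]|]; reflexivity. Qed.

Lemma esum_eq_0 n f : (forall i, (i < n)%nat -> f i = Some O) -> esum n f = Some O.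
Proof.
  induction n; intros H; [reflexivity|]. simpl. rewrite IHn, H by (auto; lia). reflexivity.
Qed.

Lemma ele_refl x : ele x x.
Proof. destruct x; simpl; auto. Qed.

Lemma ele_trans x y z : ele x y -> ele y z -> ele x z.
Proof. destruct x, y, z; simpl; intros; auto; try contradiction; lia. Qed.

Lemma ele_eadd_r x y : ele x (eadd x y).
Proof. destruct x, y; simpl; auto. lia. Qed.

Lemma ele_antisym x y : ele x y -> ele y x -> x = y.
Proof. destruct x, y; simpl; intros; try contradiction; auto. f_equal; lia. Qed.

Lemma esum_ele_mono u M N : (M <= N)%nat -> ele (esum M u) (esum N u).
Proof.
  induction 1; [apply ele_refl|]. eapply ele_trans; [exact IHle|]. apply ele_eadd_r.
Qed.

Lemma esum_stable u M N : (N <= M)%nat -> (forall n, (N <= n)%nat -> u n = Some O) ->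
  esum M u = esum N u.
Proof. intros HNM Hz. induction HNM; auto. simpl. rewrite Hz, eadd_0_r by lia. auto. Qed.

Lemma eseries_esum u N : (forall n, (N <= n)%nat -> u n = Some O) -> eseries u = esum N u.
Proof.
  intros Hz.
  assert (Hsup : is_esup (fun M => esum M u) (esum N u)).
  { split; auto. intros M. destruct (le_lt_dec M N).
    - apply esum_ele_mono; auto.
    - rewrite (esum_stable u M N) by (auto; lia). apply ele_refl. }
  pose proof (epsilon_spec (inhabits None) (is_esup (fun M => esum M u)) (ex_intro _ _ Hsup))
    as [H1 H2].
  apply ele_antisym; [apply H2, Hsup | apply Hsup, H1].
Qed.

Lemma esplit_finite d c1 c2 s : finite_on d c1 -> finite_on d c2 -> word_over d s ->
  esplit c1 c2 s <> None /\
  coefR (esplit c1 c2 s) = wconv (fun t => coefR (c1 t)) (fun t => coefR (c2 t)) s.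
Proof.
  intros H1 H2 Hs. unfold esplit, wconv.
  assert (Hterm : forall i, emul (c1 (firstn i s)) (c2 (skipn i s)) <> None /\
            coefR (emul (c1 (firstn i s)) (c2 (skipn i s)))
            = coefR (c1 (firstn i s)) * coefR (c2 (skipn i s)))
    by (intros; apply coefR_emul; [apply H1, word_over_firstn | apply H2, word_over_skipn]; auto).
  destruct (coefR_esum (S (length s)) (fun i => emul (c1 (firstn i s)) (c2 (skipn i s))))
    as [Hf Hv];
    [intros; apply Hterm|].
  split; auto. rewrite Hv. apply rsum_ext. intros; apply Hterm.
Qed.

Lemma pieces_finite d c : finite_on d c -> forall n, finite_on d (pieces c n).
Proof.
  intros Hc n; induction n; intros s Hs; simpl; [destruct s; discriminate|].
  apply (esplit_finite d c (pieces c n) s); auto.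
Qed.

Lemma pieces_nil c k n : c [] = Some k -> pieces c n [] = Some (k ^ n)%nat.
Proof.
  intros H. induction n; [reflexivity|]. simpl. unfold esplit. simpl. rewrite H, IHn, emul_Some.
  reflexivity.
Qed.

Lemma pieces_short c : c [] = Some O -> forall n s, (length s < n)%nat -> pieces c n s = Some O.
Proof.
  intros H n; induction n; intros s Hs; [lia|]. simpl. unfold esplit. apply esum_eq_0.
  intros [|i] Hi.
  - rewrite firstn_O, H. apply emul_0_l.
  - rewrite IHn by (rewrite length_skipn; lia). apply emul_0_r.
Qed.

Definition wcount (r : regex) (s : list nat) : R := coefR (cnt r s).
Definition wpieces (r : regex) (n : nat) (s : list nat) : R := coefR (pieces (cnt r) n s).

Lemma wcount_nonneg d r : nonneg_on d (wcount r).
Proof. intros s _; apply coefR_nonneg. Qed.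

Lemma wpieces_nonneg d r n : nonneg_on d (wpieces r n).
Proof. intros s _; apply coefR_nonneg. Qed.

Lemma wpieces_S d r n s : finite_on d (cnt r) -> word_over d s ->
  wpieces r (S n) s = wconv (wcount r) (wpieces r n) s.
Proof. intros Hf Hs. apply (esplit_finite d); auto. apply pieces_finite; auto. Qed.

Lemma wpieces_vanishes_below_length r : cnt r [] = Some O -> vanishes_below_length (wpieces r).
Proof. intros H n s Hs. unfold wpieces. rewrite pieces_short; auto. Qed.

Lemma wcount_star d r s : finite_on d (cnt r) -> cnt r [] = Some O -> word_over d s ->
  cnt (RStar r) s <> None /\ wcount (RStar r) s = wtotal (wpieces r) s.
Proof.
  intros Hf H0 Hs. unfold wcount, wtotal, wpieces. simpl.
  rewrite (eseries_esum _ (S (length s))) by (intros; apply pieces_short; auto; lia).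
  apply coefR_esum. intros; apply (pieces_finite d); auto.
Qed.

Lemma mser_cv_entrywise D u L :
  mser_cv D u L <->
  forall i j, (i < D)%nat -> (j < D)%nat -> infinite_sum (fun n => u n i j) (L i j).
Proof.
  assert (E : forall i j, (fun N => rsum (S N) (fun n => u n i j)) = sum_f_R0 (fun n => u n i j))
    by (intros; apply functional_extensionality; intros; apply rsum_sum_f_R0).
  unfold mser_cv. split; intros H i j Hi Hj; specialize (H i j Hi Hj);
    [rewrite E in H|rewrite E]; exact H.
Qed.

Section RegexLayers.
Variables (d D : nat) (κ : kernel) (φ : list nat -> R).
Hypothesis Hdom : dominated D κ φ.

Lemma wcount_chr c s :
  wcount (RChr c) s = match s with [c'] => if Nat.eq_dec c c' then 1 else 0 | _ => 0 end.
Proof.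
  unfold wcount. destruct s as [|x [|y s]]; simpl; auto. destruct (Nat.eq_dec c x); reflexivity.
Qed.

Lemma layers_cv_chr c : (c < d)%nat -> layers_cv d D κ (wcount (RChr c)) (kact D κ [c]).
Proof.
  intros Hc Q i j Hi Hj.
  replace (kact D κ [c] Q i j) with (layer d D κ (wcount (RChr c)) 1 Q i j).
  - apply (infinite_sum_single (fun n => layer d D κ (wcount (RChr c)) n Q i j)). intros n Hn.
    apply wordsum_eq_0. intros s Hs. rewrite wcount_chr.
    destruct s as [|x [|y s]]; simpl in Hs; [ring|lia|ring].
  - unfold layer. rewrite wordsum_1, (rsum_single _ c); auto.
    + rewrite wcount_chr. destruct (Nat.eq_dec c c); [ring|lia].
    + intros c' _ Hc'. rewrite wcount_chr. destruct (Nat.eq_dec c c'); [lia|ring].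
Qed.

Lemma layers_cv_alt r1 r2 f1 f2 : finite_on d (cnt r1) -> finite_on d (cnt r2) ->
  layers_cv d D κ (wcount r1) f1 -> layers_cv d D κ (wcount r2) f2 ->
  finite_on d (cnt (RAlt r1 r2)) /\
  layers_cv d D κ (wcount (RAlt r1 r2)) (fun Q => madd (f1 Q) (f2 Q)).
Proof.
  intros Hf1 Hf2 H1 H2. split; [intros s Hs; apply coefR_eadd; auto|].
  apply (layers_cv_weight_ext d D κ (fun s => wcount r1 s + wcount r2 s)).
  { intros s Hs. symmetry. apply coefR_eadd; auto. }
  intros Q i j Hi Hj. eapply infinite_sum_ext; [intros n; symmetry; apply layer_plus|].
  apply infinite_sum_plus; auto.
Qed.

Lemma finite_on_cat r1 r2 :
  finite_on d (cnt r1) -> finite_on d (cnt r2) -> finite_on d (cnt (RCat r1 r2)).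
Proof. intros Hf1 Hf2 s Hs. apply (esplit_finite d); auto. Qed.

Lemma layers_cv_cat_right r1 r2 f1 f2 : right_multiplicative D κ ->
  finite_on d (cnt r1) -> finite_on d (cnt r2) ->
  layers_cv d D κ (wcount r1) f1 -> layers_cv d D κ (wcount r2) f2 ->
  layers_cv d D κ (wcount (RCat r1 r2)) (fun Q => f1 (f2 Q)).
Proof.
  intros Hmul Hf1 Hf2 H1 H2.
  apply (layers_cv_weight_ext d D κ (wconv (wcount r1) (wcount r2))).
  { intros s Hs. symmetry. apply (esplit_finite d); auto. }
  apply (layers_cv_comp d D κ φ Hdom (wcount r1) (wcount r2)); auto using wcount_nonneg.
  intros; apply layer_wconv_right; auto.
Qed.

Lemma layers_cv_cat_left r1 r2 f1 f2 : left_multiplicative D κ ->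
  finite_on d (cnt r1) -> finite_on d (cnt r2) ->
  layers_cv d D κ (wcount r1) f1 -> layers_cv d D κ (wcount r2) f2 ->
  layers_cv d D κ (wcount (RCat r1 r2)) (fun Q => f2 (f1 Q)).
Proof.
  intros Hmul Hf1 Hf2 H1 H2.
  apply (layers_cv_weight_ext d D κ (wconv (wcount r1) (wcount r2))).
  { intros s Hs. symmetry. apply (esplit_finite d); auto. }
  apply (layers_cv_comp d D κ φ Hdom (wcount r2) (wcount r1)); auto using wcount_nonneg.
  intros; apply layer_wconv_left; auto.
Qed.

Lemma layers_cv_pieces_right r f : right_multiplicative D κ ->
  (forall Q i j, (i < D)%nat -> (j < D)%nat -> kact D κ [] Q i j = Q i j) ->
  finite_on d (cnt r) -> layers_cv d D κ (wcount r) f ->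
  forall n, layers_cv d D κ (wpieces r n) (Nat.iter n f).
Proof.
  intros Hmul Hnil Hf Hs n. induction n; [apply layers_cv_unit; auto; intros [|]; easy|].
  change (Nat.iter (S n) f) with (fun Q => f (Nat.iter n f Q)).
  apply (layers_cv_comp d D κ φ Hdom (wcount r) (wpieces r n));
    auto using wcount_nonneg, wpieces_nonneg.
  intros m Q i j Hi Hj. rewrite <- layer_wconv_right by auto.
  apply wordsum_ext. intros s _ Hso. rewrite (wpieces_S d); auto.
Qed.

Lemma layers_cv_pieces_left r f : left_multiplicative D κ ->
  (forall Q i j, (i < D)%nat -> (j < D)%nat -> kact D κ [] Q i j = Q i j) ->
  finite_on d (cnt r) -> layers_cv d D κ (wcount r) f ->
  forall n, layers_cv d D κ (wpieces r n) (Nat.iter n f).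
Proof.
  intros Hmul Hnil Hf Hs n. induction n; [apply layers_cv_unit; auto; intros [|]; easy|].
  apply (layers_cv_ext d D κ _ (fun Q => Nat.iter n f (f Q)));
    [intros Q i j _ _; rewrite Nat.iter_succ_r; reflexivity|].
  apply (layers_cv_comp d D κ φ Hdom (wpieces r n) (wcount r));
    auto using wcount_nonneg, wpieces_nonneg.
  intros m Q i j Hi Hj. rewrite <- layer_wconv_left by auto.
  apply wordsum_ext. intros s _ Hso. rewrite (wpieces_S d); auto.
Qed.

Section Star.
Variables (r : regex) (f : Mat -> Mat).
Hypotheses (Hfin : finite_on d (cnt r))
  (Hiter : forall n, layers_cv d D κ (wpieces r n) (Nat.iter n f)).

(** If the empty word matched [r] [k ≥ 1] times, it would match [r^n] [k^n ≥ 1] times. *)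
Lemma star_empty_count : 0 < φ [] ->
  (forall Q i j, (i < D)%nat -> (j < D)%nat ->
     exists G, infinite_sum (fun n => Nat.iter n f Q i j) G) ->
  cnt r [] = Some O.
Proof.
  intros Hφ Hcv. destruct (cnt r []) as [[|k]|] eqn:E; [reflexivity| |].
  2: exfalso; apply (Hfin []); auto; constructor.
  exfalso. apply (iterates_not_cv_of_empty_word d D κ φ Hdom (wpieces r) (fun n => Nat.iter n f));
    auto using wpieces_nonneg.
  intros n. unfold wpieces. rewrite (pieces_nil _ (S k)) by auto. simpl coefR.
  rewrite <- INR_1. apply le_INR. apply Nat.le_succ_l, Nat.neq_0_lt_0, Nat.pow_nonzero. lia.
Qed.

Hypothesis Hnil : cnt r [] = Some O.

Lemma layers_cv_star g :
  (forall Q i j, (i < D)%nat -> (j < D)%nat ->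
     infinite_sum (fun n => Nat.iter n f Q i j) (g Q i j)) ->
  finite_on d (cnt (RStar r)) /\ layers_cv d D κ (wcount (RStar r)) g.
Proof.
  intros Hcv. split; [intros s Hs; apply (wcount_star d r s); auto|].
  apply (layers_cv_weight_ext d D κ (wtotal (wpieces r))).
  { intros s Hs. symmetry. apply (wcount_star d r s); auto. }
  apply (layers_cv_wtotal d D κ φ Hdom _ (fun n => Nat.iter n f)); auto using wpieces_nonneg.
  apply wpieces_vanishes_below_length, Hnil.
Qed.

Lemma iterates_cv_of_summable_star : summable d φ (wcount (RStar r)) ->
  exists g, forall Q, mser_cv D (fun n => Nat.iter n f Q) (g Q).
Proof.
  intros [l Hl]. exists (fun Q i j => Coquelicot.Series.Series (fun n => Nat.iter n f Q i j)).
  intros Q. apply mser_cv_entrywise. intros i j Hi Hj.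
  destruct (iterates_cv_of_summable_wtotal d D κ φ Hdom (wpieces r) (fun n => Nat.iter n f))
    with (Q := Q) (i := i) (j := j) as [G HG]; auto using wpieces_nonneg.
  - apply wpieces_vanishes_below_length, Hnil.
  - exists l. eapply infinite_sum_ext; [|exact Hl]. intros n. apply wordsum_ext. intros s _ Hs.
    f_equal. apply (wcount_star d r s); auto.
  - rewrite (infinite_sum_Series _ G); auto.
Qed.

End Star.
End RegexLayers.

(** * Transfer operators as layer series *)

Lemma finite_on_chr d c : finite_on d (cnt (RChr c)).
Proof.
  intros s _. simpl. destruct s as [|x [|y s]]; try discriminate.
  destruct (Nat.eq_dec c x); discriminate.
Qed.

Lemma frob2_nil_pos D A : (0 < D)%nat -> 0 < frob2 D A [].
Proof. intros HD. rewrite frob2_nil. apply lt_0_INR, HD. Qed.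

Section ConjugationLayers.
Variables (d D : nat) (A : nat -> Mat).

Lemma layers_cv_pieces_conj_r r f : finite_on d (cnt r) ->
  layers_cv d D (conj_kernel_r D A) (wcount r) f ->
  forall n, layers_cv d D (conj_kernel_r D A) (wpieces r n) (Nat.iter n f).
Proof.
  apply (layers_cv_pieces_right d D _ _ (dominated_conj_kernel_r D A)).
  - apply right_multiplicative_conj_kernel_r.
  - apply kact_nil_conj_kernel_r.
Qed.

Lemma layers_cv_pieces_conj_l r f : finite_on d (cnt r) ->
  layers_cv d D (conj_kernel_l D A) (wcount r) f ->
  forall n, layers_cv d D (conj_kernel_l D A) (wpieces r n) (Nat.iter n f).
Proof.
  apply (layers_cv_pieces_left d D _ _ (dominated_conj_kernel_l D A)).
  - apply left_multiplicative_conj_kernel_l.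
  - apply kact_nil_conj_kernel_l.
Qed.

Lemma star_empty_count_conj_r r f g : (0 < D)%nat -> finite_on d (cnt r) ->
  layers_cv d D (conj_kernel_r D A) (wcount r) f ->
  (forall Q, mser_cv D (fun n => Nat.iter n f Q) (g Q)) -> cnt r [] = Some O.
Proof.
  intros HD Hf Hs Hcv. apply (star_empty_count d D _ _ (dominated_conj_kernel_r D A) r f);
    auto using layers_cv_pieces_conj_r, frob2_nil_pos.
  intros Q i j Hi Hj. eexists. apply (proj1 (mser_cv_entrywise _ _ _) (Hcv Q)); auto.
Qed.

Lemma star_empty_count_conj_l r f g : (0 < D)%nat -> finite_on d (cnt r) ->
  layers_cv d D (conj_kernel_l D A) (wcount r) f ->
  (forall Q, mser_cv D (fun n => Nat.iter n f Q) (g Q)) -> cnt r [] = Some O.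
Proof.
  intros HD Hf Hs Hcv. apply (star_empty_count d D _ _ (dominated_conj_kernel_l D A) r f);
    auto using layers_cv_pieces_conj_l, frob2_nil_pos.
  intros Q i j Hi Hj. eexists. apply (proj1 (mser_cv_entrywise _ _ _) (Hcv Q)); auto.
Qed.

Hypothesis HD : (0 < D)%nat.

Lemma ER_layers r f : ER D A r f -> regex_over d r ->
  finite_on d (cnt r) /\ layers_cv d D (conj_kernel_r D A) (wcount r) f.
Proof.
  pose proof (dominated_conj_kernel_r D A) as Hdom.
  induction 1 as [c|r1 r2 f1 f2 H1 IH1 H2 IH2|r1 r2 f1 f2 H1 IH1 H2 IH2|r f g H IH Hcv];
    simpl; intros Hro.
  - split; [apply finite_on_chr|].
    eapply layers_cv_ext; [|apply layers_cv_chr; auto]. intros; symmetry; apply conj_chr_r.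
  - destruct Hro as [[Hf1 Hs1]%IH1 [Hf2 Hs2]%IH2].
    split; [apply finite_on_cat|eapply layers_cv_cat_right]; eauto.
    apply right_multiplicative_conj_kernel_r.
  - destruct Hro as [[Hf1 Hs1]%IH1 [Hf2 Hs2]%IH2]. apply layers_cv_alt; auto.
  - destruct (IH Hro) as [Hf Hs].
    apply (layers_cv_star d D _ _ Hdom r f);
      eauto using layers_cv_pieces_conj_r, star_empty_count_conj_r.
    intros Q; apply (proj1 (mser_cv_entrywise _ _ _) (Hcv Q)).
Qed.

Lemma EL_layers r f : EL D A r f -> regex_over d r ->
  finite_on d (cnt r) /\ layers_cv d D (conj_kernel_l D A) (wcount r) f.
Proof.
  pose proof (dominated_conj_kernel_l D A) as Hdom.
  induction 1 as [c|r1 r2 f1 f2 H1 IH1 H2 IH2|r1 r2 f1 f2 H1 IH1 H2 IH2|r f g H IH Hcv];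
    simpl; intros Hro.
  - split; [apply finite_on_chr|].
    eapply layers_cv_ext; [|apply layers_cv_chr; auto]. intros; symmetry; apply conj_chr_l; auto.
  - destruct Hro as [[Hf1 Hs1]%IH1 [Hf2 Hs2]%IH2].
    split; [apply finite_on_cat|eapply layers_cv_cat_left]; eauto.
    apply left_multiplicative_conj_kernel_l.
  - destruct Hro as [[Hf1 Hs1]%IH1 [Hf2 Hs2]%IH2]. apply layers_cv_alt; auto.
  - destruct (IH Hro) as [Hf Hs].
    apply (layers_cv_star d D _ _ Hdom r f);
      eauto using layers_cv_pieces_conj_l, star_empty_count_conj_l.
    intros Q; apply (proj1 (mser_cv_entrywise _ _ _) (Hcv Q)).
Qed.

(** Both conjugation kernels are dominated by the same weight [frob2], so the summability that
    decides the convergence of a Kleene series does not depend on the side. *)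
Lemma conv_l_of_ER r f : ER D A r f -> regex_over d r -> conv_l D A r.
Proof.
  induction 1 as [c|r1 r2 f1 f2 H1 IH1 H2 IH2|r1 r2 f1 f2 H1 IH1 H2 IH2|r f g H IH Hcv];
    simpl; intros Hro.
  - eexists; apply EL_chr.
  - destruct Hro as [[g1 G1]%IH1 [g2 G2]%IH2]. eexists; apply EL_cat; eauto.
  - destruct Hro as [[g1 G1]%IH1 [g2 G2]%IH2]. eexists; apply EL_alt; eauto.
  - destruct (IH Hro) as [gl Hgl].
    destruct (ER_layers r f H Hro) as [Hf Hs].
    destruct (EL_layers r gl Hgl Hro) as [_ Hsl].
    destruct (ER_layers (RStar r) g (ER_star D A r f g H Hcv) Hro) as [_ Hstar].
    destruct (iterates_cv_of_summable_star d D _ _ (dominated_conj_kernel_l D A) r gl)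
      as [h Hh]; eauto using layers_cv_pieces_conj_l, star_empty_count_conj_r.
    + exact (layers_cv_summable d D _ _ (dominated_conj_kernel_r D A) _ _ Hstar).
    + exists h. apply EL_star with gl; auto.
Qed.

Lemma conv_r_of_EL r f : EL D A r f -> regex_over d r -> conv_r D A r.
Proof.
  induction 1 as [c|r1 r2 f1 f2 H1 IH1 H2 IH2|r1 r2 f1 f2 H1 IH1 H2 IH2|r f g H IH Hcv];
    simpl; intros Hro.
  - eexists; apply ER_chr.
  - destruct Hro as [[g1 G1]%IH1 [g2 G2]%IH2]. eexists; apply ER_cat; eauto.
  - destruct Hro as [[g1 G1]%IH1 [g2 G2]%IH2]. eexists; apply ER_alt; eauto.
  - destruct (IH Hro) as [gr Hgr].
    destruct (EL_layers r f H Hro) as [Hf Hs].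
    destruct (ER_layers r gr Hgr Hro) as [_ Hsr].
    destruct (EL_layers (RStar r) g (EL_star D A r f g H Hcv) Hro) as [_ Hstar].
    destruct (iterates_cv_of_summable_star d D _ _ (dominated_conj_kernel_r D A) r gr)
      as [h Hh]; eauto using layers_cv_pieces_conj_r, star_empty_count_conj_l.
    + exact (layers_cv_summable d D _ _ (dominated_conj_kernel_l D A) _ _ Hstar).
    + exists h. apply ER_star with gr; auto.
Qed.

End ConjugationLayers.

Lemma conv_r_dim0 A r : conv_r 0 A r.
Proof.
  induction r as [c|r1 [f1 H1] r2 [f2 H2]|r1 [f1 H1] r2 [f2 H2]|r [f H]].
  - eexists; apply ER_chr.
  - eexists; apply ER_cat; eauto.
  - eexists; apply ER_alt; eauto.
  - exists (fun Q => Q). apply (ER_star 0 A r f); auto. intros Q i j Hi. lia.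
Qed.

Lemma conv_l_dim0 A r : conv_l 0 A r.
Proof.
  induction r as [c|r1 [f1 H1] r2 [f2 H2]|r1 [f1 H1] r2 [f2 H2]|r [f H]].
  - eexists; apply EL_chr.
  - eexists; apply EL_cat; eauto.
  - eexists; apply EL_alt; eauto.
  - exists (fun Q => Q). apply (EL_star 0 A r f); auto. intros Q i j Hi. lia.
Qed.

Lemma mser_cv_wsum_of_layers_cv d D (κ : kernel) (conj : list nat -> Mat -> Mat) w F :
  (forall s Q i j, conj s Q i j = kact D κ s Q i j) -> layers_cv d D κ w F ->
  forall Q, mser_cv D (fun n => wsum d n (fun s => mscale (w s) (conj s Q))) (F Q).
Proof.
  intros Hconj HF Q. apply mser_cv_entrywise. intros i j Hi Hj.
  eapply infinite_sum_ext; [|apply HF; auto]. intros n. rewrite wsum_entry.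
  apply wordsum_ext. intros s _ _. unfold mscale. rewrite Hconj. reflexivity.
Qed.

Lemma lang_ind_unambiguous d r s : unambiguous d r -> word_over d s -> lang_ind r s = wcount r s.
Proof.
  intros HU Hs. unfold lang_ind, wcount. destruct (HU s Hs) as [E|E]; rewrite E; reflexivity.
Qed.

Theorem theorem2 (d D : nat) (A : nat -> Mat) (R : regex) (HR : regex_over d R) :
  (conv_r D A R <-> conv_l D A R) /\
  (conv_r D A R -> (0 < D)%nat -> forall s, word_over d s -> cnt R s <> None) /\
  (forall f, ER D A R f ->
     (forall Q, mser_cv D
        (fun n => wsum d n (fun s => mscale (coefR (cnt R s)) (conjR D A s Q))) (f Q)) /\
     (unambiguous d R -> forall Q, mser_cv D
        (fun n => wsum d n (fun s => mscale (lang_ind R s) (conjR D A s Q))) (f Q))) /\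
  (forall g, EL D A R g ->
     (forall Q, mser_cv D
        (fun n => wsum d n (fun s => mscale (coefR (cnt R s)) (conjL D A s Q))) (g Q)) /\
     (unambiguous d R -> forall Q, mser_cv D
        (fun n => wsum d n (fun s => mscale (lang_ind R s) (conjL D A s Q))) (g Q))).
Proof.
  destruct D as [|D'].
  { split; [|split; [|split]].
    - split; intros _; [apply conv_l_dim0|apply conv_r_dim0].
    - intros _ H0; lia.
    - intros f _; split; [|intros _]; intros Q i j Hi; lia.
    - intros g _; split; [|intros _]; intros Q i j Hi; lia. }
  set (D := S D'). assert (HD : (0 < D)%nat) by lia.
  split; [|split; [|split]].
  - split; intros [f H]; [eapply conv_l_of_ER | eapply conv_r_of_EL]; eauto.
  - intros [f H] _. exact (proj1 (ER_layers d D A HD R f H HR)).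
  - intros f H. destruct (ER_layers d D A HD R f H HR) as [_ Hs].
    split; [|intros HU];
      apply (mser_cv_wsum_of_layers_cv d D (conj_kernel_r D A)); auto using conjR_kact.
    apply (layers_cv_weight_ext d D _ (wcount R)); auto.
    intros; symmetry; apply (lang_ind_unambiguous d); auto.
  - intros g H. destruct (EL_layers d D A HD R g H HR) as [_ Hs].
    split; [|intros HU];
      apply (mser_cv_wsum_of_layers_cv d D (conj_kernel_l D A)); auto using conjL_kact.
    apply (layers_cv_weight_ext d D _ (wcount R)); auto.
    intros; symmetry; apply (lang_ind_unambiguous d); auto.
Qed.
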